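(* Consider $K$ devices with local datasets $\mathcal D_1,\dots,\mathcal D_K$, $\mathcal D=\bigcup_k\mathcal D_k$, $|\mathcal D|=\sum_k|\mathcal D_k|$, and in round $t$ dropout rates $\gamma_{k,t}\in[0,1)$ and regularization coefficient $\lambda_t>0$. Suppose that for every device $k$ the hypotheses below hold. For each $k$ let $j_k$ be drawn uniformly from the indices of $\mathcal D_k$, let $\mathcal D^{\{j\}}$ denote the collection of datasets $\mathcal D_k^{j_k}=\mathcal D_k\setminus\{\boldsymbol x_{j_k}\}$, and let $\boldsymbol x_{\{j\}}=(\boldsymbol x_{j_1},\dots,\boldsymbol x_{j_K})$. Then $$\mathbb E_{\mathcal D,\{j\}}\Big|\mathcal L'_{\{\nu_{k,t}\}}\big(\boldsymbol\theta_{\mathcal L'}(\mathcal D^{\{j\}}),\boldsymbol x_{\{j\}}\big)-\mathcal L'_{\{\nu_{k,t}\}}\big(\boldsymbol\theta_{\mathcal L'}(\mathcal D),\boldsymbol x_{\{j\}}\big)\Big|\le\sum_{k=1}^K\frac{2\eta^2}{\big(\Lambda_{k,t,\min}+2\lambda_t(2\gamma_{k,t}-\gamma_{k,t}^2)\big)|\mathcal D|}.$$ Hypotheses, for each $k$ (with $\hat{\boldsymbol\theta}_k=\boldsymbol\theta_{\ell_{k,\lambda_t}}(\mathcal D_k)$, $\hat{\boldsymbol\theta}_k^{j}=\boldsymbol\theta_{\ell_{k,\lambda_t}}(\mathcal D_k^{j})$): (i) $\theta\mapsto\ell_{k,\lambda_t}(\theta,\boldsymbol x)$ is $\eta$-Lipschitz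 for every $\boldsymbol x$; (ii) $\hat{\boldsymbol\theta}_k^{j}$ is close to $\hat{\boldsymbol\theta}_k$ in the sense that the second-order Taylor expansion of $\ell_{k,\lambda_t}(\cdot;\mathcal D_k)$ about $\hat{\boldsymbol\theta}_k$ is exact at $\hat{\boldsymbol\theta}_k^{j}$; (iii) $\nabla^2\ell_{k,\lambda_t}(\hat{\boldsymbol\theta}_k;\mathcal D_k)$ is positive semidefinite and $\Lambda_{k,t,\min}$ is the smallest eigenvalue of the Hessian of the unregularized empirical loss $\ell_k$ at $\hat{\boldsymbol\theta}_k$.
   Context: Pre-trained parameters $\boldsymbol\theta_0$; per-sample loss $\ell(\boldsymbol\theta,\boldsymbol x)$; datasets consist of i.i.d. samples. Regularized per-sample loss of device $k$: $\ell_{k,\lambda_t}(\boldsymbol\theta,\boldsymbol x)=\ell(\boldsymbol\theta,\boldsymbol x)+\lambda_t\,\mathbb E_{\boldsymbol d}\|\boldsymbol d\odot(\boldsymbol\theta-\boldsymbol\theta_0)\|_2^2=\ell(\boldsymbol\theta,\boldsymbol x)+\lambda_t(2\gamma_{k,t}-\gamma_{k,t}^2)\|\boldsymbol\theta-\boldsymbol\theta_0\|_2^2$, where $\boldsymbol d$ has i.i.d. Bernoulli$(2\gamma_{k,t}-\gamma_{k,t}^2)$ entries; regularized empirical loss $\ell_{k,\lambda_t}(\boldsymbol\theta;S)$ is the average of $\ell$ over $S$ plus the same penalty, and $\boldsymbol\theta_{\ell_{k,\lambda_t}}(S)$ is its minimizer. The global regularized objective is $\mathcal L'_{\{\nu_{k,t}\}}=\sum_{k}\frac{|\mathcal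 D_k|}{|\mathcal D|}\min_{\boldsymbol\theta_k}\ell_{k,\lambda_t}(\boldsymbol\theta_k;\mathcal D_k)$, so its minimizer $\boldsymbol\theta_{\mathcal L'}(\mathcal D)$ is the tuple of per-device minimizers $(\hat{\boldsymbol\theta}_k)_k$ (and $\boldsymbol\theta_{\mathcal L'}(\mathcal D^{\{j\}})=(\hat{\boldsymbol\theta}_k^{j_k})_k$); its per-sample value at $(\boldsymbol\theta_k)_k$ on $\boldsymbol x_{\{j\}}$ is $\sum_k\frac{|\mathcal D_k|}{|\mathcal D|}\ell_{k,\lambda_t}(\boldsymbol\theta_k,\boldsymbol x_{j_k})$. *)

From HB Require Import structures.
From mathcomp Require Import all_boot all_order all_algebra.
From mathcomp Require Import all_classical all_reals all_analysis.
Set Implicit Arguments.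
Unset Strict Implicit.
Unset Printing Implicit Defensive.
Import Order.TTheory GRing.Theory Num.Theory.
Import numFieldNormedType.Exports.
Local Open Scope ring_scope.

Section FLDefs.
Variables (R : realType) (p : nat).

Definition sqnorm2 (v : 'rV[R]_p) : R := \sum_(i < p) v 0 i ^+ 2.
Definition norm2 (v : 'rV[R]_p) : R := Num.sqrt (sqnorm2 v).
Definition dotp (u v : 'rV[R]_p) : R := \sum_(i < p) u 0 i * v 0 i.
Definition unitvec (i : 'I_p) : 'rV[R]_p := delta_mx 0 i.

Definition partial (i : 'I_p) (f : 'rV[R]_p -> R) (th : 'rV[R]_p) : R :=
  'D_(unitvec i) f th.
Definition gradient (f : 'rV[R]_p -> R) (th : 'rV[R]_p) : 'rV[R]_p :=
  \row_i partial i f th.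
Definition hessian (f : 'rV[R]_p -> R) (th : 'rV[R]_p) : 'M[R]_p :=
  \matrix_(i, j) partial i (partial j f) th.

Definition quadform (H : 'M[R]_p) (v : 'rV[R]_p) : R := (v *m H *m v^T) 0 0.
Definition psd (H : 'M[R]_p) : Prop := forall v, 0 <= quadform H v.
Definition min_eigenvalue (H : 'M[R]_p) (a : R) : Prop :=
  eigenvalue H a /\ forall b, eigenvalue H b -> a <= b.

Definition is_minimizer (L : 'rV[R]_p -> R) (th : 'rV[R]_p) : Prop :=
  forall th', L th <= L th'.

Variable X : Type.

(* keep probability 2 gamma - gamma^2 of the Bernoulli mask *)
Definition keep_prob (g : R) : R := 2 * g - g ^+ 2.

Definition reg_loss (l : 'rV[R]_p -> X -> R) (th0 : 'rV[R]_p) (lam g : R)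
  (th : 'rV[R]_p) (x : X) : R :=
  l th x + lam * keep_prob g * sqnorm2 (th - th0).

Definition emp_loss (l : 'rV[R]_p -> X -> R) (S : seq X) (th : 'rV[R]_p) : R :=
  (size S)%:R^-1 * \sum_(x <- S) l th x.

Definition reg_emp_loss (l : 'rV[R]_p -> X -> R) (th0 : 'rV[R]_p) (lam g : R)
  (S : seq X) (th : 'rV[R]_p) : R :=
  emp_loss l S th + lam * keep_prob g * sqnorm2 (th - th0).

Definition dataset (n : nat) (D : 'I_n -> X) : seq X := [seq D i | i <- enum 'I_n].
Definition dataset_minus (n : nat) (D : 'I_n -> X) (j : 'I_n) : seq X :=
  [seq D i | i <- enum 'I_n & i != j].

Variable K : nat.

Definition total_size (n : 'I_K -> nat) : R := \sum_(k < K) (n k)%:R.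

Definition Lprime (n : 'I_K -> nat) (lk : 'I_K -> 'rV[R]_p -> X -> R)
  (ths : 'I_K -> 'rV[R]_p) (xs : 'I_K -> X) : R :=
  \sum_(k < K) ((n k)%:R / total_size n) * lk k (ths k) (xs k).

(* expectation over independent uniform indices j_k in 'I_(n k) *)
Definition unif_expect (n : 'I_K -> nat)
  (F : {dffun forall k : 'I_K, 'I_(n k)} -> R) : R :=
  (\prod_(k < K) (n k)%:R)^-1 * \sum_(j : {dffun forall k : 'I_K, 'I_(n k)}) F j.

End FLDefs.

Arguments unif_expect {R K} n F.
Arguments Lprime {R p X K} n lk ths xs.
Arguments total_size {R K} n.

(* Fix a device with n samples, let L be its regularised empirical loss, L^j the
   loss without sample x_j, and mu = Lam + 2 lam (2 gam - gam^2).  Since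
   n L = (n - 1) L^j + l_reg(., x_j) and thj minimises L^j, the gain
   n (L(thj) - L(th)) is at most the change d of l_reg(., x_j) between the two
   minimisers.  At the minimiser th of L the gradient vanishes and the Hessian of
   L is that of the unregularised loss plus 2 lam (2 gam - gam^2) I, so the exact
   Taylor expansion and the Rayleigh bound give L(thj) - L(th) >= mu/2 |thj - th|^2.
   Combined with |d| <= eta |thj - th| this yields n |d| <= 2 eta^2 / mu for every
   left-out index; weighting by n_k / |D| and averaging over the indices gives the
   bound. *)

From HB Require Import structures.
From mathcomp Require Import all_boot all_order all_algebra.
From mathcomp Require Import all_classical all_reals all_analysis.
From mathcomp Require Import ring lra.
Import Order.TTheory GRing.Theory Num.Theory.
Import numFieldNormedType.Exports.
Local Open Scope classical_set_scope.
Local Open Scope ring_scope.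
Set Implicit Arguments.
Unset Strict Implicit.
Unset Printing Implicit Defensive.

Section QuadraticForms.
Variables (R : realType) (p : nat).
Implicit Types (u v w z : 'rV[R]_p) (H A : 'M[R]_p).

Definition bilform H u w : R := (u *m H *m w^T) 0 0.

Lemma quadformE H u : quadform H u = bilform H u u. Proof. by []. Qed.

Lemma bilformDl H u1 u2 w : bilform H (u1 + u2) w = bilform H u1 w + bilform H u2 w.
Proof. by rewrite /bilform !mulmxDl mxE. Qed.

Lemma bilformDr H u w1 w2 : bilform H u (w1 + w2) = bilform H u w1 + bilform H u w2.
Proof. by rewrite /bilform linearD /= mulmxDr mxE. Qed.

Lemma bilformZl H t u w : bilform H (t *: u) w = t * bilform H u w.
Proof. by rewrite /bilform -!scalemxAl mxE. Qed.

Lemma bilformZr H t u w : bilform H u (t *: w) = t * bilform H u w.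
Proof. by rewrite /bilform linearZ /= -scalemxAr mxE. Qed.

Lemma bilformC H u w : H^T = H -> bilform H u w = bilform H w u.
Proof.
move=> HT; rewrite /bilform -[in LHS](trmxK (u *m H *m w^T)) [LHS]mxE.
by rewrite !trmx_mul trmxK HT mulmxA.
Qed.

Lemma quadform0 H : quadform H 0 = 0.
Proof. by rewrite /quadform !mul0mx mxE. Qed.

Lemma quadformZ H t u : quadform H (t *: u) = t ^+ 2 * quadform H u.
Proof. by rewrite !quadformE bilformZl bilformZr mulrA -expr2. Qed.

Lemma quadform_line A v z t : A^T = A ->
  quadform A (v + t *: z)
  = quadform A v + t * (2 * bilform A v z) + t ^+ 2 * quadform A z.
Proof.
move=> AT; rewrite !quadformE !(bilformDl, bilformDr, bilformZl, bilformZr).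
by rewrite [bilform A z v]bilformC //; ring.
Qed.

Lemma sqnorm2E u : sqnorm2 u = quadform 1%:M u.
Proof.
rewrite /quadform mulmx1 mxE; apply: eq_bigr => i _.
by rewrite mxE expr2.
Qed.

Lemma quadformD_scalar H s u :
  quadform (H + s%:M) u = quadform H u + s * sqnorm2 u.
Proof.
rewrite sqnorm2E /quadform mulmx1 mulmxDr mulmxDl mul_mx_scalar -scalemxAl.
by rewrite mxE [in X in _ + X]mxE.
Qed.

Lemma sqnorm2_ge0 u : 0 <= sqnorm2 u.
Proof. by apply: sumr_ge0 => i _; exact: sqr_ge0. Qed.

Lemma sqnorm2_eq0 u : (sqnorm2 u == 0) = (u == 0).
Proof.
rewrite /sqnorm2 psumr_eq0 => [|i _]; last exact: sqr_ge0.
apply/idP/eqP => [/allP u0|->]; last by apply/allP => i _ /=; rewrite mxE expr0n.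
apply/matrixP => i j; rewrite ord1 mxE; apply/eqP; rewrite -sqrf_eq0.
exact: (implyP (u0 j (mem_index_enum j))).
Qed.

Lemma sqnorm2_0 : sqnorm2 (0 : 'rV[R]_p) = 0.
Proof. by rewrite sqnorm2E quadform0. Qed.

Lemma sqnorm2Z t u : sqnorm2 (t *: u) = t ^+ 2 * sqnorm2 u.
Proof. by rewrite !sqnorm2E quadformZ. Qed.

Lemma sqnorm2_line u w t :
  sqnorm2 (t *: u + w) = sqnorm2 w + t * (2 * dotp u w) + t ^+ 2 * sqnorm2 u.
Proof.
rewrite /sqnorm2 /dotp !mulr_sumr -!big_split /=; apply: eq_bigr => i _.
by rewrite !mxE; ring.
Qed.

Lemma sqr_norm2 u : norm2 u ^+ 2 = sqnorm2 u.
Proof. by rewrite sqr_sqrtr ?sqnorm2_ge0. Qed.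

Lemma norm2_ge0 u : 0 <= norm2 u.
Proof. exact: sqrtr_ge0. Qed.

Lemma sqnorm2_normalize u : u != 0 -> sqnorm2 ((norm2 u)^-1 *: u) = 1.
Proof.
rewrite -sqnorm2_eq0 => u0.
by rewrite sqnorm2Z exprVn sqr_norm2 mulVf.
Qed.

Lemma continuous_quadform H : continuous (quadform H).
Proof.
have -> : quadform H = fun u => \sum_(j < p) (\sum_(k < p) u 0 k * H k j) * u 0 j.
  by apply/funext => u; rewrite /quadform mxE; apply: eq_bigr => j _; rewrite !mxE.
apply: (@continuous_big _ _ +%R 0 xpredT add_continuous) => j _ u.
apply: continuousM; last exact: coord_continuous.
apply: (@continuous_big _ _ +%R 0 xpredT add_continuous) => k _ {}u.
by apply: continuousM; [exact: coord_continuous | exact: cst_continuous].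
Qed.

Lemma continuous_sqnorm2 : continuous (@sqnorm2 R p).
Proof.
rewrite (_ : @sqnorm2 R p = quadform 1%:M); last exact/funext/sqnorm2E.
exact: continuous_quadform.
Qed.

End QuadraticForms.

Lemma quadratic_ge0_linear_coef (R : realFieldType) (a b : R) :
  0 <= b -> (forall t, 0 <= t * a + t ^+ 2 * b) -> a = 0.
Proof.
move=> b0 ge0; have b1 : b + 1 != 0 by rewrite lt0r_neq0 // ltr_wpDl.
have := ge0 (- a / (b + 1)).
have -> : - a / (b + 1) * a + (- a / (b + 1)) ^+ 2 * b = - (a / (b + 1)) ^+ 2.
  by field.
rewrite oppr_ge0 => /(conj (sqr_ge0 (a / (b + 1))))/andP/le_anti/esym/eqP.
by rewrite sqrf_eq0 mulf_eq0 invr_eq0 (negbTE b1) orbF => /eqP.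
Qed.

Section Rayleigh.
Variables (R : realType) (p : nat).
Implicit Types (u v w d : 'rV[R]_p) (H A : 'M[R]_p).

Lemma psd_quadform_eq0 A v : A^T = A -> psd A -> quadform A v = 0 -> v *m A = 0.
Proof.
move=> AT Apsd qv0; set z := v *m A.
have vz : bilform A v z = sqnorm2 z by rewrite sqnorm2E /quadform mulmx1.
suff /quadratic_ge0_linear_coef :
    forall t, 0 <= t * (2 * sqnorm2 z) + t ^+ 2 * quadform A z.
  by move=> /(_ (Apsd z))/eqP; rewrite mulf_eq0 pnatr_eq0 sqnorm2_eq0 => /eqP.
by move=> t; have := Apsd (v + t *: z); rewrite quadform_line // qv0 vz add0r.
Qed.

Lemma quadform_sphere_min H u : sqnorm2 u = 1 ->
  exists2 v, sqnorm2 v = 1 & forall w, sqnorm2 w = 1 -> quadform H v <= quadform H w.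
Proof.
move=> u1; pose S := [set v : 'rV[R]_p | sqnorm2 v = 1].
have cS : compact S.
  apply: (@subclosed_compact _ _
    [set v : 'rV[R]_p | forall i, `[-1, 1]%classic (v ord0 i)]).
  - apply: (@preimage_closed _ _ (@sqnorm2 R p) [set 1]); last exact: closed_eq.
    by move=> v _; exact: continuous_sqnorm2.
  - have := @rV_compact R p (fun=> `[-1, 1]%classic); apply => _; exact: segment_compact.
  - move=> v /= v1 i; rewrite /= in_itv /= -ler_norml.
    rewrite -[_ <= 1](ler_pXn2r (isT : (0 < 2)%N)) ?nnegrE //.
    rewrite expr1n real_normK ?num_real // -v1 /sqnorm2 (bigD1 i) //= lerDl.
    by apply: sumr_ge0 => j _; exact: sqr_ge0.
have cq : {within S, continuous (quadform H)}.
  exact: continuous_subspaceT (@continuous_quadform _ _ H).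
have [v vS vmin] := compact_EVT_min (ex_intro _ u u1) cS cq.
by exists v => [|w w1]; [rewrite inE in vS | apply: vmin; rewrite inE].
Qed.

Lemma quadform_ge_sphere_min H v :
    (forall w, sqnorm2 w = 1 -> quadform H v <= quadform H w) ->
  forall w, quadform H v * sqnorm2 w <= quadform H w.
Proof.
move=> vmin w; have [->|w0] := eqVneq w 0.
  by rewrite quadform0 sqnorm2_0 mulr0.
have := vmin _ (sqnorm2_normalize w0); rewrite quadformZ exprVn sqr_norm2.
have sw : 0 < sqnorm2 w by rewrite lt_def sqnorm2_eq0 w0 sqnorm2_ge0.
by rewrite mulrC -ler_pdivlMr.
Qed.

Lemma quadform_ge_min_eigenvalue H Lam d : H^T = H -> min_eigenvalue H Lam ->
  Lam * sqnorm2 d <= quadform H d.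
Proof.
(* A minimiser v of the form on the unit sphere is an eigenvector for the
   minimum m: the form of H - m I is nonnegative and vanishes at v. *)
move=> HT [_ Lam_min]; have [->|d0] := eqVneq d 0.
  by rewrite quadform0 sqnorm2_0 mulr0.
have [v v1 vmin] := quadform_sphere_min H (sqnorm2_normalize d0).
set m := quadform H v; have m_le := quadform_ge_sphere_min vmin.
have Apsd : psd (H + (- m)%:M).
  by move=> w; rewrite quadformD_scalar mulNr subr_ge0.
have /psd_quadform_eq0 : quadform (H + (- m)%:M) v = 0.
  by rewrite quadformD_scalar v1 mulr1 subrr.
rewrite linearD /= tr_scalar_mx HT => /(_ erefl Apsd).
rewrite mulmxDr mul_mx_scalar scaleNr => /eqP; rewrite addr_eq0 opprK => /eqP vH.
have : eigenvalue H m.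
  by apply/eigenvalueP; exists v; rewrite // -sqnorm2_eq0 v1 oner_neq0.
move=> /Lam_min Lm; apply: le_trans (m_le d).
by rewrite ler_wpM2r // sqnorm2_ge0.
Qed.
End Rayleigh.

Section DirectionalDerivatives.
Variables (R : realType) (V : normedModType R).
Implicit Types (f : V -> R) (x v : V).

Lemma is_derive_quadratic_line f x v (a b : R) :
  (forall h : R, f (h *: v + x) = f x + h * a + h ^+ 2 * b) -> is_derive x v f a.
Proof.
move=> fE.
have quotient_cvg : (fun h : R => h^-1 *: ((f \o shift x) (h *: v) - f x)) @ 0^' --> a.
  apply: (@cvg_trans _ ((fun h : R => a + h * b) @ 0^')).
    apply: near_eq_cvg; near=> h.
    have h0 : h != 0 by near: h; exact: nbhs_dnbhs_neq.
    by rewrite /= fE /GRing.scale /=; field.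
  apply: (@cvg_trans _ ((fun h : R => a + h * b) @ nbhs (0 : R))).
    exact: cvg_app (@nbhs_dnbhs _ 0).
  have : (fun h : R => a + h * b) @ nbhs (0 : R) --> a + 0 * b.
    by apply: cvgD; [exact: cvg_cst | apply: cvgM; [exact: cvg_id | exact: cvg_cst]].
  by rewrite mul0r addr0.
apply: DeriveDef; first by apply/cvg_ex; exists a.
exact: cvg_lim quotient_cvg.
Unshelve. all: by end_near. Qed.

Lemma derive_along_line f x v : 'D_v f x = 'D_1 (fun h : R => f (h *: v + x)) 0.
Proof.
rewrite /derive; congr (lim (_ @ 0^')); apply/funext => h /=.
by rewrite addr0 scale0r add0r [_%:A]mulr1.
Qed.

Lemma derive_at_min f x v : (forall y, derivable f y v) -> (forall y, f x <= f y) ->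
  'D_v f x = 0.
Proof.
move=> df fmin; rewrite derive_along_line.
suff : is_derive (0 : R) 1 (fun h : R => f (h *: v + x)) 0 by case.
apply: (@derive1_at_min _ _ (-1) 1) => [|t _||t _]; first lra.
- apply/derivable1P; have /derivable1P := df (t *: v + x).
  suff -> : (fun h : R => f ((h%:A + t) *: v + x))
            = (fun h => f (h *: v + (t *: v + x))) by [].
  by apply/funext => h; rewrite [_%:A]mulr1 scalerDl addrA.
- by rewrite in_itv /= ltrN10 ltr01.
- by rewrite scale0r add0r.
Qed.

End DirectionalDerivatives.

Section Gradients.
Variables (R : realType) (p : nat).
Implicit Types (f : 'rV[R]_p -> R) (th v : 'rV[R]_p).
Variable th0 : 'rV[R]_p.

Lemma is_derive_sqnorm2_shift th v :
  is_derive th v (fun t => sqnorm2 (t - th0)) (2 * dotp v (th - th0)).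
Proof. by apply: is_derive_quadratic_line => h; rewrite -addrA sqnorm2_line. Qed.

Lemma is_derive_coord_shift th v (c : R) (j : 'I_p) :
  is_derive th v (fun t => c * (t - th0) 0 j) (c * v 0 j).
Proof.
by apply: (@is_derive_quadratic_line _ _ _ _ _ _ 0) => h; rewrite !mxE; ring.
Qed.

Lemma gradient_at_min f th : (forall i y, derivable f y (@unitvec R p i)) ->
  is_minimizer f th -> gradient f th = 0.
Proof. by move=> df fmin; apply/rowP => i; rewrite !mxE; exact: derive_at_min. Qed.

Lemma partial_add_sqnorm2 f (c : R) (j : 'I_p) :
    (forall y, derivable f y (@unitvec R p j)) ->
  partial j (fun t => f t + c * sqnorm2 (t - th0))
  = fun t => partial j f t + c * 2 * (t - th0) 0 j.
Proof.
move=> df; apply/funext => t; rewrite /partial.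
have /derivableP Df := df t.
have := is_deriveD Df (is_deriveZ c (is_derive_sqnorm2_shift t (@unitvec R p j))).
move=> [_ ->]; rewrite /dotp (bigD1 j) //= big1 => [|i ij].
  by rewrite !mxE !eqxx mul1r addr0 /GRing.scale /= mulrA.
by rewrite !mxE (negbTE ij) andbF mul0r.
Qed.

Lemma hessian_add_sqnorm2 f (c : R) th :
    (forall j y, derivable f y (@unitvec R p j)) ->
    (forall i j, derivable (partial j f) th (@unitvec R p i)) ->
  hessian (fun t => f t + c * sqnorm2 (t - th0)) th = hessian f th + (2 * c)%:M.
Proof.
move=> df d2f; apply/matrixP => i j; rewrite !mxE partial_add_sqnorm2 //.
have /derivableP D2f := d2f i j.
have := is_deriveD D2f (is_derive_coord_shift th (@unitvec R p i) (c * 2) j).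
rewrite /partial; move=> [_ ->]; rewrite !mxE eqxx /= eq_sym mulrC.
by case: (i == j); rewrite ?mul1r ?mul0r ?mulr1n ?mulr0n // mulrC.
Qed.

End Gradients.

Section EmpiricalLoss.
Variables (R : realType) (p : nat) (X : Type).
Implicit Types (S : seq X) (th v : 'rV[R]_p).

Lemma is_derive_emp_loss (l : 'rV[R]_p -> X -> R) S th v :
    (forall x, derivable (l^~ x) th v) ->
  is_derive th v (emp_loss l S) (emp_loss (fun t x => 'D_v (l^~ x) t) S th).
Proof.
move=> dl; have -> : emp_loss l S = (size S)%:R^-1 \*: \sum_(x <- S) l^~ x.
  by apply/funext => t; rewrite /emp_loss fct_sumE.
apply: is_deriveZ; elim/big_ind2 : _ => [|d1 f1 d2 f2 D1 D2|x _].
- exact: is_derive_cst.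
- exact: is_deriveD.
- exact: derivableP.
Qed.

Variables (l : 'rV[R]_p -> X -> R) (th0 : 'rV[R]_p).

Hypothesis dl : forall x th v, derivable (fun t => l t x) th v.
Hypothesis dl2 : forall x th i v, derivable (partial i (fun t => l t x)) th v.

Lemma partial_emp_loss S (i : 'I_p) :
  partial i (emp_loss l S) = emp_loss (fun t x => partial i (l^~ x) t) S.
Proof.
apply/funext => th; rewrite /partial.
by have [_ ->] := is_derive_emp_loss S (fun x => @dl x th (@unitvec R p i)).
Qed.

Lemma derivable_reg_emp_loss (lam g : R) S th v :
  derivable (reg_emp_loss l th0 lam g S) th v.
Proof.
have [De _] := is_derive_emp_loss S (fun x => @dl x th v).
have [Dq _] := is_derive_sqnorm2_shift th0 th v.
have -> : reg_emp_loss l th0 lam g S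
          = emp_loss l S + (lam * keep_prob g) \*: (fun t => sqnorm2 (t - th0)).
  by apply/funext.
exact: derivableD De (derivableZ Dq).
Qed.

Lemma gradient_reg_emp_loss_min (lam g : R) S th :
  is_minimizer (reg_emp_loss l th0 lam g S) th ->
  gradient (reg_emp_loss l th0 lam g S) th = 0.
Proof. by apply: gradient_at_min => i y; exact: derivable_reg_emp_loss. Qed.

Lemma hessian_reg_emp_loss (lam g : R) S th :
  hessian (reg_emp_loss l th0 lam g S) th
  = hessian (emp_loss l S) th + (2 * (lam * keep_prob g))%:M.
Proof.
rewrite /reg_emp_loss (hessian_add_sqnorm2 th0 (f := emp_loss l S)) => [//|j y|i j].
  by have [] := is_derive_emp_loss S (fun x => @dl x y (@unitvec R p j)).
rewrite partial_emp_loss.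
by have [] := is_derive_emp_loss S (fun x => @dl2 x th j (@unitvec R p i)).
Qed.

End EmpiricalLoss.

Section LeaveOneOut.
Variables (R : realType) (p : nat) (X : Type).
Variables (l : 'rV[R]_p -> X -> R) (th0 : 'rV[R]_p) (lam g : R).
Variables (n : nat) (D : 'I_n -> X) (j : 'I_n).

Lemma mulr_size_emp_loss (S : seq X) t :
  (size S)%:R * emp_loss l S t = \sum_(x <- S) l t x.
Proof.
rewrite /emp_loss; case: S => [|x S]; first by rewrite big_nil !mulr0.
by rewrite mulrA mulfV ?mul1r // pnatr_eq0.
Qed.

Lemma size_dataset : size (dataset D) = n.
Proof. by rewrite size_map size_enum_ord. Qed.

Lemma perm_enum_rem : perm_eq (enum 'I_n) (j :: [seq i <- enum 'I_n | i != j]).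
Proof. by rewrite -rem_filter ?enum_uniq //; exact/perm_to_rem/mem_enum. Qed.

Lemma size_dataset_minus : size (dataset D) = (size (dataset_minus D j)).+1.
Proof. by rewrite !size_map -enumT (perm_size perm_enum_rem). Qed.

Lemma big_dataset_minus (F : X -> R) :
  \sum_(x <- dataset D) F x = F (D j) + \sum_(x <- dataset_minus D j) F x.
Proof. by rewrite !big_map -enumT (perm_big _ perm_enum_rem) big_cons. Qed.

Lemma reg_emp_loss_leave_one_out t :
  (size (dataset D))%:R * reg_emp_loss l th0 lam g (dataset D) t
  = (size (dataset_minus D j))%:R * reg_emp_loss l th0 lam g (dataset_minus D j) t
    + reg_loss l th0 lam g t (D j).
Proof.
rewrite /reg_emp_loss /reg_loss !mulrDr !mulr_size_emp_loss.
by rewrite big_dataset_minus size_dataset_minus -addn1 natrD; ring.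
Qed.

Lemma leave_one_out_gain th thj :
  is_minimizer (reg_emp_loss l th0 lam g (dataset_minus D j)) thj ->
  n%:R * (reg_emp_loss l th0 lam g (dataset D) thj
          - reg_emp_loss l th0 lam g (dataset D) th)
  <= reg_loss l th0 lam g thj (D j) - reg_loss l th0 lam g th (D j).
Proof.
move=> thj_min; have -> : n%:R = (size (dataset D))%:R :> R by rewrite size_dataset.
rewrite mulrBr !reg_emp_loss_leave_one_out opprD addrACA -mulrBr gerDr.
by apply: mulr_ge0_le0; rewrite ?subr_le0.
Qed.

End LeaveOneOut.

Lemma quadratic_growth_lipschitz (R : realFieldType) (a N d eta : R) :
  0 < a -> 0 <= N -> a * N ^+ 2 <= d -> d <= eta * N -> a * d <= eta ^+ 2.
Proof.
move=> a0 N0 growth lip; have [N00|Nn0] := eqVneq N 0.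
  move: growth lip; rewrite N00 expr0n !mulr0 => d0 d0'.
  have -> : d = 0 by apply/eqP; rewrite eq_le d0 d0'.
  by rewrite mulr0 sqr_ge0.
have Npos : 0 < N by rewrite lt_def Nn0.
have aN : a * N <= eta by rewrite -(ler_pM2r Npos) -mulrA -expr2 (le_trans growth).
nra.
Qed.

Section LeaveOneOutStability.
Variables (R : realType) (p : nat) (X : Type).
Variables (l : 'rV[R]_p -> X -> R) (th0 : 'rV[R]_p) (lam g Lam eta : R).
Hypothesis dl : forall x th v, derivable (fun t => l t x) th v.
Hypothesis dl2 : forall x th i v, derivable (partial i (fun t => l t x)) th v.
Variables (n : nat) (D : 'I_n -> X) (th : 'rV[R]_p).
Let L := reg_emp_loss l th0 lam g (dataset D).
Let H := hessian (emp_loss l (dataset D)) th.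
Hypothesis th_min : is_minimizer L th.
Hypothesis H_sym : H^T = H.
Hypothesis Lam_min : min_eigenvalue H Lam.

Lemma reg_emp_loss_quadratic_growth thj :
    L thj = L th + dotp (gradient L th) (thj - th)
            + 2^-1 * quadform (hessian L th) (thj - th) ->
  (Lam + 2 * lam * keep_prob g) / 2 * sqnorm2 (thj - th) <= L thj - L th.
Proof.
move=> taylor; rewrite taylor (gradient_reg_emp_loss_min dl th_min).
rewrite /dotp big1 => [|i _]; last by rewrite mxE mul0r.
rewrite addr0 addrAC subrr add0r (hessian_reg_emp_loss th0 dl dl2) quadformD_scalar.
rewrite mulrAC mulrC ler_wpM2l ?invr_ge0 ?ler0n // mulrDl mulrA lerD2r.
exact: quadform_ge_min_eigenvalue.
Qed.

Lemma leave_one_out_stability (j : 'I_n) thj :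
    is_minimizer (reg_emp_loss l th0 lam g (dataset_minus D j)) thj ->
    `|reg_loss l th0 lam g thj (D j) - reg_loss l th0 lam g th (D j)|
      <= eta * norm2 (thj - th) ->
    L thj = L th + dotp (gradient L th) (thj - th)
            + 2^-1 * quadform (hessian L th) (thj - th) ->
    0 < Lam + 2 * lam * keep_prob g ->
  n%:R * `|reg_loss l th0 lam g thj (D j) - reg_loss l th0 lam g th (D j)|
    <= 2 * eta ^+ 2 / (Lam + 2 * lam * keep_prob g).
Proof.
set d := reg_loss _ _ _ _ _ _ - _; set mu := Lam + _.
move=> thj_min lip taylor mu_gt0.
have n_gt0 : 0 < n%:R :> R by rewrite ltr0n (leq_ltn_trans (leq0n j) (ltn_ord j)).
have growth : n%:R * mu / 2 * norm2 (thj - th) ^+ 2 <= `|d|.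
  apply: le_trans (ler_norm d); apply: le_trans (leave_one_out_gain th thj_min).
  rewrite sqr_norm2 -[n%:R * mu / 2]mulrA -mulrA ler_wpM2l ?ler0n //.
  exact: reg_emp_loss_quadratic_growth.
have a_gt0 : 0 < n%:R * mu / 2 by rewrite divr_gt0 ?mulr_gt0.
have := quadratic_growth_lipschitz a_gt0 (norm2_ge0 _) growth lip.
rewrite ler_pdivlMr // -(ler_pM2l (ltr0Sn R 1)).
by have -> : n%:R * `|d| * mu = 2 * (n%:R * mu / 2 * `|d|) by field.
Qed.

End LeaveOneOutStability.

Section Aggregation.
Variables (R : realType) (K : nat) (n : 'I_K -> nat).

Lemma size_le_total_size k : (n k)%:R <= @total_size R K n.
Proof.
rewrite /total_size (bigD1 k) //= lerDl.
by apply: sumr_ge0 => i _; exact: ler0n.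
Qed.

Lemma Lprime_dist_le (p : nat) (X : Type) (lk : 'I_K -> 'rV[R]_p -> X -> R)
    (ths ths' : 'I_K -> 'rV[R]_p) (xs : 'I_K -> X) :
  `|Lprime n lk ths xs - Lprime n lk ths' xs|
  <= \sum_(k < K) (n k)%:R / total_size n
                  * `|lk k (ths k) (xs k) - lk k (ths' k) (xs k)|.
Proof.
rewrite /Lprime -sumrB; apply: le_trans (ler_norm_sum _ _ _) _.
apply: ler_sum => k _; rewrite -mulrBr normrM ger0_norm //.
by rewrite divr_ge0 // (le_trans _ (size_le_total_size k)).
Qed.

Lemma unif_expect_le (F : {dffun forall k : 'I_K, 'I_(n k)} -> R) (B : R) :
  (forall k, 0 < n k)%N -> (forall j, F j <= B) -> unif_expect n F <= B.
Proof.
move=> n_gt0 FB; rewrite /unif_expect.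
have N_gt0 : 0 < \prod_(k < K) (n k)%:R :> R by apply: prodr_gt0 => k _; rewrite ltr0n.
rewrite ler_pdivrMl // -natr_prod.
have -> : (\prod_(k < K) n k)%N = #|{dffun forall k : 'I_K, 'I_(n k)}|.
  rewrite card_dep_ffun foldrE big_map big_enum.
  by apply: eq_bigr => k _; rewrite card_ord.
by rewrite mulr_natl -sumr_const; apply: ler_sum => j _; exact: FB.
Qed.

End Aggregation.

Theorem theorem2 (R : realType) (p K : nat) (X : Type)
  (l : 'rV[R]_p -> X -> R) (th0 : 'rV[R]_p) (lam : R) (gam : 'I_K -> R)
  (n : 'I_K -> nat) (D : forall k : 'I_K, 'I_(n k) -> X)
  (thhat : 'I_K -> 'rV[R]_p) (thhatj : forall k : 'I_K, 'I_(n k) -> 'rV[R]_p)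
  (eta : R) (Lam : 'I_K -> R) :
  0 < lam ->
  (forall k, 0 <= gam k /\ gam k < 1) ->
  (forall k, (0 < n k)%N) ->
  (* regularity: l(.,x) has (second) directional derivatives *)
  (forall x th v, derivable (fun t => l t x) th v) ->
  (forall x th i v, derivable (partial i (fun t => l t x)) th v) ->
  (* minimizers theta_hat_k and theta_hat_k^j *)
  (forall k, is_minimizer (reg_emp_loss l th0 lam (gam k) (dataset (D k))) (thhat k)) ->
  (forall k j, is_minimizer
                 (reg_emp_loss l th0 lam (gam k) (dataset_minus (D k) j)) (thhatj k j)) ->
  (* (i) eta-Lipschitz *)
  (forall k x th th',
     `|reg_loss l th0 lam (gam k) th x - reg_loss l th0 lam (gam k) th' x|
       <= eta * norm2 (th - th')) ->
  (* (ii) exact second-order Taylor expansion at theta_hat_k^j *)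
  (forall k j,
     let L := reg_emp_loss l th0 lam (gam k) (dataset (D k)) in
     let d := thhatj k j - thhat k in
     L (thhatj k j) = L (thhat k) + dotp (gradient L (thhat k)) d
                      + 2^-1 * quadform (hessian L (thhat k)) d) ->
  (* (iii) PSD regularized Hessian; Lam k = smallest eigenvalue of unregularized one *)
  (forall k, psd (hessian (reg_emp_loss l th0 lam (gam k) (dataset (D k))) (thhat k))) ->
  (forall k, min_eigenvalue (hessian (emp_loss l (dataset (D k))) (thhat k)) (Lam k)) ->
  (* regularity: the Hessian is symmetric (as for C^2 losses) *)
  (forall k, (hessian (emp_loss l (dataset (D k))) (thhat k))^T
             = hessian (emp_loss l (dataset (D k))) (thhat k)) ->
  (* the bound is finite *)
  (forall k, 0 < Lam k + 2 * lam * keep_prob (gam k)) ->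
  unif_expect n (fun j =>
    `| Lprime n (fun k => reg_loss l th0 lam (gam k))
              (fun k => thhatj k (j k)) (fun k => D k (j k))
     - Lprime n (fun k => reg_loss l th0 lam (gam k))
              thhat (fun k => D k (j k)) |)
  <= \sum_(k < K) (2 * eta ^+ 2)
        / ((Lam k + 2 * lam * keep_prob (gam k)) * total_size n).
Proof.
move=> _ _ n_gt0 dl dl2 th_min thj_min lip taylor _ Lam_min H_sym mu_gt0.
apply: unif_expect_le => // j; apply: le_trans (Lprime_dist_le n _ _ _ _) _.
apply: ler_sum => k _ /=.
have T_gt0 : 0 < total_size n :> R.
  by apply: lt_le_trans (size_le_total_size _ n k); rewrite ltr0n.
rewrite mulrAC invfM mulrA ler_pM2r ?invr_gt0 //.
exact: (leave_one_out_stability dl dl2 (th_min k) (H_sym k) (Lam_min k)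
  (thj_min k (j k)) (lip k _ _ _) (taylor k (j k)) (mu_gt0 k)).
Qed.
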